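(* Let $T$ be a tree that is not a path, let $\ell$ be a leaf of $T$, let $P_\ell$ be the path branch of $T$ containing $\ell$, let $v$ be the neighbor of $P_\ell$, and let $X \subseteq V(T)$ with $\ell \notin X$. Then \[ \mathcal{F}_{T,-X} = \mathcal{F}_{T,\ell,-X} + \mathcal{F}_{T - P_\ell,\, -(X\cup\{v\})}. \]
   Context: A fort of a graph $G$ is a nonempty set $F\subseteq V(G)$ such that every vertex outside $F$ is adjacent to either zero or at least two vertices of $F$; it is minimal if no proper subset is a fort. For a graph $H$ and a vertex set $A$, $\mathcal{F}_{H,-A}$ is the number of minimal forts of $H$ disjoint from $A$, and $\mathcal{F}_{H,\ell,-A}$ is the number of minimal forts of $H$ that contain $\ell$ and are disjoint from $A$. In a tree $T$, the path branch of a leaf $\ell$ is the maximal connected induced subgraph containing $\ell$ all of whose vertices have degree one or two in $T$; the neighbor of a path branch is the unique vertex not in the branch adjacent to a vertex of the branch (it exists when $T$ is not a path). *)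

From mathcomp Require Import all_boot.
Set Implicit Arguments. Unset Strict Implicit. Unset Printing Implicit Defensive.

(* A simple graph: vertex type V (finType), edge relation e : rel V
   (assumed symmetric and irreflexive in the theorem).  Induced subgraphs
   are given by a vertex set S : {set V}. *)

Section Graphs.
Variables (V : finType) (e : rel V).

Definition induced (S : {set V}) : rel V :=
  [rel x y | [&& x \in S, y \in S & e x y]].

Definition nbrs (S : {set V}) (x : V) : {set V} := [set y in S | e x y].

Definition deg (x : V) : nat := #|[set y | e x y]|.

Definition connected_on (S : {set V}) : bool :=
  [forall x in S, forall y in S, connect (induced S) x y].

Definition has_cycle : Prop :=
  exists s : seq V, [/\ 3 <= size s, uniq s & cycle e s].

Definition is_tree : Prop := connected_on [set: V] /\ ~ has_cycle.

Definition is_path_graph : Prop := is_tree /\ forall x, deg x <= 2.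

Definition leaf (l : V) : bool := deg l == 1.

Definition is_fort (S F : {set V}) : bool :=
  [&& F != set0, F \subset S &
      [forall u in S :\: F, #|nbrs S u :&: F| != 1]].

Definition minimal_fort (S F : {set V}) : bool :=
  is_fort S F && [forall F' : {set V}, (F' \proper F) ==> ~~ is_fort S F'].

Definition nforts (S A : {set V}) : nat :=
  #|[set F : {set V} | minimal_fort S F & [disjoint F & A]]|.

Definition nforts_with (S : {set V}) (l : V) (A : {set V}) : nat :=
  #|[set F : {set V} | [&& minimal_fort S F, l \in F & [disjoint F & A]]]|.

Definition branch_cand (l : V) : pred {set V} :=
  fun P => [&& l \in P, connected_on P &
               [forall x in P, (deg x == 1) || (deg x == 2)]].

Definition is_path_branch (l : V) (P : {set V}) : bool :=
  maxset (branch_cand l) P.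

Definition branch_neighbor (P : {set V}) (v : V) : Prop :=
  [/\ v \notin P, exists2 u, u \in P & e u v &
      forall w, w \notin P -> (exists2 u, u \in P & e u w) -> w = v].

End Graphs.

From mathcomp Require Import all_boot.
Set Implicit Arguments. Unset Strict Implicit. Unset Printing Implicit Defensive.

(* Let F be a fort of T with l outside F. Walking along the path branch from
   l, every vertex has degree at most 2 and its predecessor lies outside F,
   so it has at most one neighbour in F, hence none: F misses P and v. On
   sets missing P and v the fort conditions in T and in T - P coincide,
   because the vertices of P then see no vertex of F; the agreement passes
   to subsets, so the minimal forts correspond as well. Splitting the
   minimal forts of T by whether they contain l gives the identity. *)

Section Forts.
Variables (V : finType) (e : rel V).

Lemma deg_nbrsT x : deg e x = #|nbrs e [set: V] x|.
Proof. by apply: eq_card => y; rewrite !inE. Qed.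

Lemma nbrsI_subset (S F : {set V}) u : F \subset S ->
  nbrs e S u :&: F = nbrs e [set: V] u :&: F.
Proof.
move=> sFS; apply/setP => y; rewrite !inE.
by case yF: (y \in F); rewrite ?andbF // (subsetP sFS y yF).
Qed.

(* The degree bound says that z has at most one neighbour in F. *)
Lemma fort_nbrsI_eq0 (S F : {set V}) z : is_fort e S F -> z \in S :\: F ->
  #|nbrs e S z| <= #|nbrs e S z :\: F|.+1 -> nbrs e S z :&: F = set0.
Proof.
case/and3P=> _ _ /forall_inP/(_ z) fortF {}/fortF ne1.
rewrite -(cardsID F) addnC -addn1 leq_add2l => le1.
apply/eqP; rewrite -cards_eq0.
by move: ne1 le1; case: #|_ :&: F| => [|[]].
Qed.

Lemma minimal_fort_eq (S S' F : {set V}) :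
  (forall F' : {set V}, F' \subset F -> is_fort e S F' = is_fort e S' F') ->
  minimal_fort e S F = minimal_fort e S' F.
Proof.
move=> eqSS'; rewrite /minimal_fort eqSS' //; congr andb.
apply: eq_forallb => F'; case: (boolP (F' \proper F)) => //= /proper_sub sF'.
by rewrite eqSS'.
Qed.

Lemma nbrsI_eq0_notin (S F : {set V}) x y :
  nbrs e S x :&: F = set0 -> y \in S -> e x y -> y \notin F.
Proof.
by move=> /setP/(_ y) xN yS exy; apply/negP=> yF; rewrite !inE yS exy yF in xN.
Qed.

End Forts.

Section PathBranch.
Variables (V : finType) (e : rel V).
Hypothesis e_sym : symmetric e.
Variables (l : V) (P : {set V}).
Hypotheses (l_leaf : leaf e l) (P_cand : branch_cand e l P).

Lemma fort_avoids_branch (F : {set V}) :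
  is_fort e [set: V] F -> l \notin F ->
  {in P, forall x, x \notin F /\ nbrs e [set: V] x :&: F = set0}.
Proof.
case/and3P: P_cand => lP /forall_inP/(_ l lP)/forall_inP connP.
move=> /forall_inP degP fortF lF.
have nbrs_out x : x \notin F ->
    #|nbrs e [set: V] x| <= #|nbrs e [set: V] x :\: F|.+1 ->
    nbrs e [set: V] x :&: F = set0.
  by move=> xF; apply: fort_nbrsI_eq0; rewrite // !inE xF.
move=> x /connP/connectP[p]; elim/last_ind: p x => [|p z IHp] x /=.
  by move=> _ ->; rewrite lF nbrs_out // -deg_nbrsT (eqP l_leaf).
rewrite rcons_path last_rcons => /andP[pathp /and3P[_ zP eyz]] ->{x}.
have [yF yN] := IHp _ pathp erefl; set y := last l p in yF yN eyz *.
have zF : z \notin F by apply: nbrsI_eq0_notin yN _ eyz.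
split=> //; apply: nbrs_out => //; rewrite -deg_nbrsT.
case/orP: (degP z zP) => /eqP-> //; rewrite ltnS.
by apply/card_gt0P; exists y; rewrite !inE yF e_sym eyz.
Qed.

Variable v : V.
Hypothesis v_nbr : branch_neighbor e P v.

Lemma fort_subset_compl_branch (F : {set V}) :
  is_fort e [set: V] F -> l \notin F -> F \subset ~: P /\ v \notin F.
Proof.
move=> fortF lF; have avoidP := fort_avoids_branch fortF lF.
case: v_nbr => _ [u uP euv] _; split.
  by apply/subsetP=> x xF; rewrite inE; apply: contraL xF => /avoidP[].
by have [_ /nbrsI_eq0_notin] := avoidP u uP; apply.
Qed.

Lemma is_fort_compl_branch (F : {set V}) : F \subset ~: P -> v \notin F ->
  is_fort e [set: V] F = is_fort e (~: P) F.
Proof.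
move=> sFP vF; rewrite /is_fort subsetT sFP; congr andb.
apply: eq_forallb => u.
rewrite !inE andbT; case uP: (u \in P); last by rewrite andbT nbrsI_subset.
rewrite andbF implyFb; apply/implyP=> _; apply/eqP=> card1.
have /card_gt0P[w] : 0 < #|nbrs e [set: V] u :&: F| by rewrite card1.
rewrite !inE => /andP[euw wF]; case: v_nbr => _ _ /(_ w).
have wP : w \notin P by rewrite -in_setC (subsetP sFP).
by move=> /(_ wP (ex_intro2 _ _ u uP euw)) wv; rewrite -wv wF in vF.
Qed.

Lemma minimal_fort_compl_branch (F : {set V}) :
  (l \notin F) && minimal_fort e [set: V] F =
  minimal_fort e (~: P) F && (v \notin F).
Proof.
have lP : l \in P by case/and3P: P_cand.
have forts_eq : F \subset ~: P -> v \notin F -> forall F' : {set V},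
    F' \subset F -> is_fort e [set: V] F' = is_fort e (~: P) F'.
  move=> sFP vF F' sF'F; apply: is_fort_compl_branch.
    exact: subset_trans sF'F sFP.
  exact: contra (subsetP sF'F v) vF.
apply/andP/andP=> [[lF minF] | [minF vF]].
  have [sFP vF] := fort_subset_compl_branch (andP minF).1 lF.
  by rewrite -(minimal_fort_eq (forts_eq sFP vF)).
have sFP : F \subset ~: P by case/andP: minF => /and3P[].
have lF : l \notin F by apply: contraL lP => /(subsetP sFP); rewrite inE.
by rewrite (minimal_fort_eq (forts_eq sFP vF)).
Qed.

End PathBranch.

Theorem mainTheorem12 (V : finType) (e : rel V)
  (e_sym : symmetric e) (e_irr : irreflexive e)
  (Htree : is_tree e) (Hnotpath : ~ is_path_graph e)
  (l : V) (Hleaf : leaf e l)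
  (P : {set V}) (HP : is_path_branch e l P)
  (v : V) (Hv : branch_neighbor e P v)
  (X : {set V}) (HX : l \notin X) :
  nforts e [set: V] X =
    nforts_with e [set: V] l X + nforts e (~: P) (X :|: [set v]).
Proof.
rewrite /nforts /nforts_with -(cardsID [set F : {set V} | l \in F]).
congr addn; apply: eq_card => F; rewrite !inE.
  by rewrite -andbA [[disjoint F & X] && _]andbC.
have disjF : [disjoint F & X :|: [set v]] = [disjoint F & X] && (v \notin F).
  rewrite -!setI_eq0 setIUr setU_eq0 [F :&: [set v]]setIC.
  by rewrite !setI_eq0 disjoints1.
rewrite disjF andbA (minimal_fort_compl_branch e_sym Hleaf (maxsetp HP) Hv).
by rewrite andbAC andbA.
Qed.
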